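(* Let $\mathbb{T}$ be a time scale, $\alpha<\beta$ points of $\mathbb{T}$, and let $\varphi,\psi:[\alpha,\beta]_{\mathbb{T}}\to\mathbb{R}$ be nabla differentiable with $\psi^{\nabla}(x)\neq 0$ for $x\in(\alpha,\beta]_{\mathbb{T}}$. Define $$\mathcal{Y}_{\varphi,\psi}(x)=\frac{\varphi^{\nabla}(x)}{\psi^{\nabla}(x)}\psi(x)-\varphi(x),\qquad x\in(\alpha,\beta]_{\mathbb{T}}.$$ Suppose that $\varphi^{\nabla}/\psi^{\nabla}$ is nabla differentiable. Then: (1) If $\psi^{\rho}\ge 0$ and $\varphi^{\nabla}/\psi^{\nabla}$ is increasing (resp. decreasing), then $\mathcal{Y}_{\varphi,\psi}$ is increasing (resp. decreasing). (2) If $\psi^{\rho}\le 0$ and $\varphi^{\nabla}/\psi^{\nabla}$ is increasing (resp. decreasing), then $\mathcal{Y}_{\varphi,\psi}$ is decreasing (resp. increasing).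
   Context: $\mathbb{T}$ is a time scale (nonempty closed subset of $\mathbb{R}$), $[\alpha,\beta]_{\mathbb{T}}=[\alpha,\beta]\cap\mathbb{T}$. $\rho(t)=\sup\{s\in\mathbb{T}:s<t\}$ is the backward jump operator, $f^{\rho}=f\circ\rho$, and $f^{\nabla}$ is the nabla derivative. ''Increasing''/''decreasing'' are meant in the non-strict sense (nondecreasing/nonincreasing). *)

From Stdlib Require Import Reals.
From Coquelicot Require Import Coquelicot.
Open Scope R_scope.

Definition time_scale (T : R -> Prop) : Prop :=
  (exists t, T t) /\ closed_set T.

(* Backward jump operator rho(t) = sup {s in T | s < t}, with the usual
   convention sup of the empty set = t (so rho(min T) = min T). *)
Definition rho (T : R -> Prop) (t : R) : R :=
  match Lub_Rbar (fun s => T s /\ s < t) with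
  | Finite r => r
  | _ => t
  end.

Definition Icc_T (T : R -> Prop) (a b : R) (x : R) : Prop := T x /\ a <= x <= b.
Definition Ioc_T (T : R -> Prop) (a b : R) (x : R) : Prop := T x /\ a < x <= b.

Definition is_nabla_deriv (T D : R -> Prop) (f : R -> R) (t d : R) : Prop :=
  forall eps : R, 0 < eps -> exists delta : R, 0 < delta /\
    forall s : R, D s -> Rabs (t - s) < delta ->
      Rabs (f (rho T t) - f s - d * (rho T t - s)) <= eps * Rabs (rho T t - s).

Definition increasing_on (D : R -> Prop) (f : R -> R) : Prop :=
  forall s t, D s -> D t -> s <= t -> f s <= f t.
Definition decreasing_on (D : R -> Prop) (f : R -> R) : Prop :=
  forall s t, D s -> D t -> s <= t -> f t <= f s.

From Stdlib Require Import Reals Lra Psatz Classical.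
From Coquelicot Require Import Coquelicot.
Open Scope R_scope.

(* Write g = phi^nabla / psi^nabla.  The nabla product rule gives
   Y^nabla = g^nabla psi^rho + g psi^nabla - phi^nabla = g^nabla psi^rho, since
   g psi^nabla = phi^nabla.  A monotone g has a nabla derivative of the matching
   sign, so Y^nabla has the sign of +-psi^rho, and a function with a nonnegative
   (nonpositive) nabla derivative is increasing (decreasing).  The last fact is
   proved by a backward induction on the time scale, applied to the statements
   F r <= F t + eps (t - r). *)

Lemma le_0_of_le_eps_mul (a b : R) :
  0 <= b -> (forall eps, 0 < eps -> a <= eps * b) -> a <= 0.
Proof.
  intros Hb H. apply Rle_plus_epsilon. intros eps Heps.
  assert (Hq : 0 < eps / (b + 1)) by (apply Rdiv_lt_0_compat; lra).
  specialize (H _ Hq).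
  replace (eps / (b + 1) * b) with (eps - eps / (b + 1)) in H by (field; lra).
  lra.
Qed.

Lemma is_lub_approx (E : R -> Prop) (m eps : R) :
  is_lub E m -> 0 < eps -> exists u, E u /\ m - eps < u <= m.
Proof.
  intros [Hub Hleast] Heps. apply NNPP. intros Hno.
  assert (m <= m - eps); [|lra].
  apply Hleast. intros u Eu. apply Rnot_lt_le. intros Hu.
  apply Hno. exists u. split; [exact Eu|]. split; [lra | exact (Hub u Eu)].
Qed.

Lemma closed_set_adherent (T : R -> Prop) (x : R) :
  closed_set T -> (forall eps, 0 < eps -> exists u, T u /\ Rabs (u - x) < eps) -> T x.
Proof.
  intros HT Hadh. apply NNPP. intros Hx.
  destruct (HT x Hx) as [[d Hd] Hdisc].
  destruct (Hadh d Hd) as [u [Tu Hu]].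
  exact (Hdisc u Hu Tu).
Qed.

Lemma closed_set_lub_mem (T E : R -> Prop) (m : R) :
  closed_set T -> (forall u, E u -> T u) -> is_lub E m -> T m.
Proof.
  intros HT HET Hm. apply closed_set_adherent; [exact HT|].
  intros eps Heps. destruct (is_lub_approx E m eps Hm Heps) as [u [Eu Hu]].
  exists u. split; [exact (HET u Eu)|]. apply Rabs_def1; lra.
Qed.

Definition left_dense (T : R -> Prop) (t : R) : Prop :=
  forall delta, 0 < delta -> exists u, T u /\ t - delta < u < t.

Definition right_dense (T : R -> Prop) (t : R) : Prop :=
  forall delta, 0 < delta -> exists u, T u /\ t < u < t + delta.

Lemma next_point (T : R -> Prop) (c t : R) :
  closed_set T -> T t -> c < t -> ~ right_dense T c ->
  exists v, T v /\ c < v <= t /\ forall u, T u -> ~ (c < u < v).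
Proof.
  intros HT Tt Hct Hnd.
  assert (Hgap : exists d, 0 < d /\ forall u, T u -> ~ (c < u < c + d)).
  { apply NNPP. intros Hno. apply Hnd. intros d Hd. apply NNPP. intros Hd'.
    apply Hno. exists d. split; [exact Hd|]. intros u Tu Hu. apply Hd'. exists u. auto. }
  destruct Hgap as [d [Hd Hgap]].
  (* the next point is -m, where m is the sup of {y | -y in T, c < -y <= t} *)
  set (E := fun y => T (- y) /\ c < - y <= t).
  assert (Et : E (- t)) by (unfold E; rewrite Ropp_involutive; split; [exact Tt | lra]).
  destruct (completeness E) as [m Hm].
  { exists (- c). intros y [_ Hy]. lra. }
  { exists (- t). exact Et. }
  assert (Hmt : - t <= m) by exact (proj1 Hm _ Et).
  assert (Hmc : m <= - (c + d)).
  { apply (proj2 Hm). intros y [Ty Hy].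
    apply Rnot_lt_le. intros Hlt. apply (Hgap (- y) Ty). lra. }
  exists (- m). split; [|split; [lra|]].
  - apply closed_set_adherent; [exact HT|]. intros eps Heps.
    destruct (is_lub_approx E m eps Hm Heps) as [y [[Ty _] Hy]].
    exists (- y). split; [exact Ty|]. apply Rabs_def1; lra.
  - intros u Tu Hu.
    assert (Eu : E (- u)) by (unfold E; rewrite Ropp_involutive; split; [exact Tu | lra]).
    pose proof (proj1 Hm _ Eu). lra.
Qed.

Lemma rho_is_lub (T : R -> Prop) (x u : R) :
  T u -> u < x -> is_lub (fun s => T s /\ s < x) (rho T x).
Proof.
  intros Tu Hux.
  destruct (completeness (fun s => T s /\ s < x)) as [m Hm].
  { exists x. intros s [_ Hs]. lra. }
  { exists u. split; assumption. }
  replace (rho T x) with m; [exact Hm|].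
  unfold rho. rewrite (is_lub_Rbar_unique _ m); [reflexivity|]. split.
  - intros s Hs. exact (proj1 Hm s Hs).
  - intros [b| |] Hb; simpl; [| exact I | exact (Hb u (conj Tu Hux))].
    apply (proj2 Hm). intros s Hs. exact (Hb s Hs).
Qed.

Lemma rho_ge (T : R -> Prop) (x u : R) : T u -> u < x -> u <= rho T x.
Proof. intros Tu Hux. exact (proj1 (rho_is_lub T x u Tu Hux) u (conj Tu Hux)). Qed.

Lemma rho_le (T : R -> Prop) (x u : R) : T u -> u < x -> rho T x <= x.
Proof.
  intros Tu Hux. apply (proj2 (rho_is_lub T x u Tu Hux)). intros s [_ Hs]. lra.
Qed.

Lemma rho_mem (T : R -> Prop) (x u : R) : closed_set T -> T u -> u < x -> T (rho T x).
Proof.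
  intros HT Tu Hux. apply (closed_set_lub_mem T (fun s => T s /\ s < x)); [exact HT | |].
  - intros s [Ts _]. exact Ts.
  - exact (rho_is_lub T x u Tu Hux).
Qed.

Lemma rho_gap (T : R -> Prop) (c v : R) :
  T c -> c < v -> (forall u, T u -> ~ (c < u < v)) -> rho T v = c.
Proof.
  intros Tc Hcv Hgap. apply (is_lub_u (fun s => T s /\ s < v)).
  - exact (rho_is_lub T v c Tc Hcv).
  - split.
    + intros u [Tu Hu]. apply Rnot_lt_le. intros Hcu. exact (Hgap u Tu (conj Hcu Hu)).
    + intros b Hb. exact (Hb c (conj Tc Hcv)).
Qed.

Lemma left_dense_rho (T : R -> Prop) (x : R) : left_dense T x -> rho T x = x.
Proof.
  intros Hld. destruct (Hld 1 Rlt_0_1) as [u [Tu Hu]].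
  apply (is_lub_u (fun s => T s /\ s < x)); [exact (rho_is_lub T x u Tu (proj2 Hu))|].
  split.
  - intros s [_ Hs]. lra.
  - intros b Hb. apply Rnot_lt_le. intros Hbx.
    destruct (Hld (x - b)) as [w [Tw Hw]]; [lra|].
    pose proof (Hb w (conj Tw (proj2 Hw))). lra.
Qed.

Lemma rho_eq_left_dense (T : R -> Prop) (x u : R) :
  T u -> u < x -> rho T x = x -> left_dense T x.
Proof.
  intros Tu Hux Hrho delta Hdelta.
  pose proof (rho_is_lub T x u Tu Hux) as Hlub. rewrite Hrho in Hlub.
  destruct (is_lub_approx _ x delta Hlub Hdelta) as [w [[Tw Hw] Hwx]].
  exists w. split; [exact Tw | lra].
Qed.

(* Dual of the induction principle of Bohner and Peterson, going down from t. *)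
Lemma time_scale_backward_ind (T : R -> Prop) (s t : R) (P : R -> Prop) :
  closed_set T -> T t -> P t ->
  (forall c v, T c -> T v -> s <= c -> c < v <= t ->
     (forall u, T u -> ~ (c < u < v)) -> P v -> P c) ->
  (forall v, T v -> s < v <= t -> left_dense T v -> P v ->
     exists delta, 0 < delta /\ forall r, T r -> v - delta < r <= v -> P r) ->
  (forall v, T v -> s <= v < t -> right_dense T v ->
     (forall r, T r -> v < r <= t -> P r) -> P v) ->
  forall r, Icc_T T s t r -> P r.
Proof.
  intros HT Tt Pt Hstep_gap Hstep_left Hstep_right r0 [Tr0 Hr0]. apply NNPP. intros nPr0.
  set (A := fun r => Icc_T T s t r /\ ~ P r).
  destruct (completeness A) as [c Hc].
  { exists t. intros r [[_ Hr] _]. lra. }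
  { exists r0. split; [split|]; assumption. }
  assert (Tc : T c).
  { apply (closed_set_lub_mem T A c HT); [intros r [[Tr _] _]; exact Tr | exact Hc]. }
  assert (Hsc : s <= c) by (pose proof (proj1 Hc r0 (conj (conj Tr0 Hr0) nPr0)); lra).
  assert (Hct : c <= t) by (apply (proj2 Hc); intros r [[_ Hr] _]; lra).
  assert (Pabove : forall r, T r -> c < r <= t -> P r).
  { intros r Tr Hr. apply NNPP. intros nPr.
    assert (Ar : A r) by (split; [split; [exact Tr | lra] | exact nPr]).
    pose proof (proj1 Hc r Ar). lra. }
  destruct (classic (P c)) as [Pc | nPc].
  - (* c is approached from the left by counterexamples, so it is left-dense *)
    assert (Happ : forall delta, 0 < delta -> exists u, A u /\ c - delta < u < c).
    { intros delta Hdelta. destruct (is_lub_approx A c delta Hc Hdelta) as [u [Au Hu]].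
      exists u. split; [exact Au|]. split; [lra|].
      destruct (Req_dec u c) as [->|]; [exact (False_ind _ (proj2 Au Pc)) | lra]. }
    destruct (Happ 1 Rlt_0_1) as [u0 [[[_ Hu0] _] Hu0c]].
    assert (Hld : left_dense T c).
    { intros delta Hdelta. destruct (Happ delta Hdelta) as [u [[[Tu _] _] Hu]]. eauto. }
    destruct (Hstep_left c Tc (conj (Rle_lt_trans _ _ _ (proj1 Hu0) (proj2 Hu0c)) Hct) Hld Pc)
      as [delta [Hdelta Hnear]].
    destruct (Happ delta Hdelta) as [u [[[Tu _] nPu] Hu]].
    apply nPu, Hnear; [exact Tu | lra].
  - assert (Hct' : c < t) by (destruct (Req_dec c t) as [->|]; [contradiction | lra]).
    destruct (classic (right_dense T c)) as [Hrd | Hnrd].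
    + exact (nPc (Hstep_right c Tc (conj Hsc Hct') Hrd Pabove)).
    + destruct (next_point T c t HT Tt Hct' Hnrd) as [v [Tv [Hv Hvgap]]].
      exact (nPc (Hstep_gap c v Tc Tv Hsc Hv Hvgap (Pabove v Tv Hv))).
Qed.

Definition littleo_within (D : R -> Prop) (t : R) (e h : R -> R) : Prop :=
  forall eps, 0 < eps -> exists delta, 0 < delta /\
    forall s, D s -> Rabs (t - s) < delta -> Rabs (e s) <= eps * Rabs (h s).

Section LittleO.

Variables (D : R -> Prop) (t : R) (h : R -> R).

Lemma littleo_within_ext (e1 e2 : R -> R) :
  (forall s, D s -> e1 s = e2 s) -> littleo_within D t e1 h -> littleo_within D t e2 h.
Proof.
  intros Heq He eps Heps. destruct (He eps Heps) as [delta [Hdelta Hs]].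
  exists delta. split; [exact Hdelta|]. intros s Ds Hts. rewrite <- (Heq s Ds). auto.
Qed.

Lemma littleo_within_plus (e1 e2 : R -> R) :
  littleo_within D t e1 h -> littleo_within D t e2 h ->
  littleo_within D t (fun s => e1 s + e2 s) h.
Proof.
  intros He1 He2 eps Heps.
  destruct (He1 (eps / 2)) as [d1 [Hd1 H1]]; [lra|].
  destruct (He2 (eps / 2)) as [d2 [Hd2 H2]]; [lra|].
  exists (Rmin d1 d2). split; [apply Rmin_pos; assumption|]. intros s Ds Hts.
  specialize (H1 s Ds (Rlt_le_trans _ _ _ Hts (Rmin_l _ _))).
  specialize (H2 s Ds (Rlt_le_trans _ _ _ Hts (Rmin_r _ _))).
  eapply Rle_trans; [apply Rabs_triang | lra].
Qed.

Lemma littleo_within_mul_l (b e : R -> R) (l : R) :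
  limit1_in b D l t -> littleo_within D t e h ->
  littleo_within D t (fun s => b s * e s) h.
Proof.
  intros Hb He eps Heps.
  set (M := Rabs l + 1).
  assert (HM : 0 < M) by (pose proof (Rabs_pos l); unfold M; lra).
  destruct (Hb 1 Rlt_0_1) as [d1 [Hd1 H1]].
  destruct (He (eps / M)) as [d2 [Hd2 H2]]; [apply Rdiv_lt_0_compat; assumption|].
  exists (Rmin d1 d2). split; [apply Rmin_pos; assumption|]. intros s Ds Hts.
  assert (Hbs : Rabs (b s) <= M).
  { assert (Hd : Rdist s t < d1).
    { unfold Rdist. rewrite Rabs_minus_sym. exact (Rlt_le_trans _ _ _ Hts (Rmin_l _ _)). }
    specialize (H1 s (conj Ds Hd)). simpl in H1. unfold Rdist in H1.
    pose proof (Rabs_triang_inv (b s) l). unfold M. lra. }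
  specialize (H2 s Ds (Rlt_le_trans _ _ _ Hts (Rmin_r _ _))).
  rewrite Rabs_mult.
  apply Rle_trans with (M * (eps / M * Rabs (h s))).
  - apply Rmult_le_compat; auto using Rabs_pos.
  - right. field. lra.
Qed.

Lemma littleo_within_vanishing (u : R -> R) (l : R) :
  limit1_in u D l t -> littleo_within D t (fun s => (u s - l) * h s) h.
Proof.
  intros Hu eps Heps. destruct (Hu eps Heps) as [delta [Hdelta Hs]].
  exists delta. split; [exact Hdelta|]. intros s Ds Hts.
  assert (Hd : Rdist s t < delta) by (unfold Rdist; rewrite Rabs_minus_sym; exact Hts).
  specialize (Hs s (conj Ds Hd)). simpl in Hs. unfold Rdist in Hs.
  rewrite Rabs_mult. apply Rmult_le_compat_r; [apply Rabs_pos | lra].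
Qed.

End LittleO.

Section NablaDerivative.

Variables (T D : R -> Prop) (t : R).

Lemma is_nabla_deriv_littleo (f : R -> R) (d : R) :
  is_nabla_deriv T D f t d <->
  littleo_within D t (fun s => f (rho T t) - f s - d * (rho T t - s)) (fun s => rho T t - s).
Proof. reflexivity. Qed.

Lemma is_nabla_deriv_subdomain (D' : R -> Prop) (f : R -> R) (d : R) :
  (forall x, D' x -> D x) -> is_nabla_deriv T D f t d -> is_nabla_deriv T D' f t d.
Proof.
  intros HD Hf eps Heps. destruct (Hf eps Heps) as [delta [Hdelta Hs]].
  exists delta. split; [exact Hdelta|]. intros s Ds. exact (Hs s (HD s Ds)).
Qed.

Lemma nabla_deriv_jump (f : R -> R) (d : R) :
  D t -> is_nabla_deriv T D f t d -> f t - f (rho T t) = d * (t - rho T t).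
Proof.
  intros Dt Hf.
  assert (H0 : Rabs (f (rho T t) - f t - d * (rho T t - t)) <= 0).
  { apply (le_0_of_le_eps_mul _ (Rabs (rho T t - t))); [apply Rabs_pos|].
    intros eps Heps. destruct (Hf eps Heps) as [delta [Hdelta Hs]].
    apply Hs; [exact Dt|]. rewrite Rminus_diag, Rabs_R0. exact Hdelta. }
  pose proof (Rabs_pos (f (rho T t) - f t - d * (rho T t - t))).
  assert (Hz : f (rho T t) - f t - d * (rho T t - t) = 0) by (apply Rabs_eq_0; lra).
  lra.
Qed.

Lemma is_nabla_deriv_continuous (f : R -> R) (d : R) :
  D t -> is_nabla_deriv T D f t d -> limit1_in f D (f t) t.
Proof.
  intros Dt Hf eps Heps.
  pose proof (nabla_deriv_jump f d Dt Hf) as Hjump.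
  set (K := Rabs (rho T t - t)). set (A := Rabs d).
  assert (HK : 0 <= K) by apply Rabs_pos. assert (HA : 0 <= A) by apply Rabs_pos.
  destruct (Hf (eps / (2 * (K + 1)))) as [d1 [Hd1 H1]]; [apply Rdiv_lt_0_compat; lra|].
  set (d2 := Rmin 1 (eps / (2 * (A + 1)))).
  assert (Hd2 : 0 < d2) by (apply Rmin_pos; [lra | apply Rdiv_lt_0_compat; lra]).
  assert (Hd2_1 : d2 <= 1) by apply Rmin_l.
  assert (Hd2_A : d2 <= eps / (2 * (A + 1))) by apply Rmin_r.
  exists (Rmin d1 d2). split; [apply Rmin_pos; assumption|].
  intros s [Ds Hs]. simpl in *. unfold Rdist in *. rewrite Rabs_minus_sym in Hs.
  assert (Hs1 : Rabs (t - s) < d1) by exact (Rlt_le_trans _ _ _ Hs (Rmin_l _ _)).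
  assert (Hs2 : Rabs (t - s) < d2) by exact (Rlt_le_trans _ _ _ Hs (Rmin_r _ _)).
  specialize (H1 s Ds Hs1).
  assert (Hrs : Rabs (rho T t - s) <= K + 1).
  { replace (rho T t - s) with ((rho T t - t) + (t - s)) by ring.
    pose proof (Rabs_triang (rho T t - t) (t - s)). fold K in H. lra. }
  assert (Herr : eps / (2 * (K + 1)) * Rabs (rho T t - s) <= eps / 2).
  { apply Rle_trans with (eps / (2 * (K + 1)) * (K + 1)).
    - apply Rmult_le_compat_l; [left; apply Rdiv_lt_0_compat; lra | exact Hrs].
    - right. field. lra. }
  assert (Hlin : A * Rabs (t - s) < eps / 2).
  { apply Rle_lt_trans with (A * (eps / (2 * (A + 1)))).
    - apply Rmult_le_compat_l; [exact HA | lra].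
    - replace (A * (eps / (2 * (A + 1)))) with (eps / 2 - eps / (2 * (A + 1))) by (field; lra).
      assert (0 < eps / (2 * (A + 1))) by (apply Rdiv_lt_0_compat; lra). lra. }
  (* by the jump formula, f s - f t is d (s - t) up to the derivative error at s *)
  replace (f s - f t) with (- (f (rho T t) - f s - d * (rho T t - s)) + d * (s - t)) by lra.
  eapply Rle_lt_trans; [apply Rabs_triang|].
  rewrite Rabs_Ropp, Rabs_mult, (Rabs_minus_sym s t). fold A. lra.
Qed.

Lemma is_nabla_deriv_opp (f : R -> R) (d : R) :
  is_nabla_deriv T D f t d -> is_nabla_deriv T D (fun x => - f x) t (- d).
Proof.
  intros Hf. apply is_nabla_deriv_littleo.
  apply (littleo_within_ext D t _
           (fun s => -1 * (f (rho T t) - f s - d * (rho T t - s)))); [intros; ring|].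
  exact (littleo_within_mul_l D t _ _ _ (-1) (limit_free (fun _ => -1) D 0 t) Hf).
Qed.

Lemma is_nabla_deriv_minus (f g : R -> R) (df dg : R) :
  is_nabla_deriv T D f t df -> is_nabla_deriv T D g t dg ->
  is_nabla_deriv T D (fun x => f x - g x) t (df - dg).
Proof.
  intros Hf Hg. apply is_nabla_deriv_littleo.
  apply (littleo_within_ext D t _ (fun s => (f (rho T t) - f s - df * (rho T t - s))
           + -1 * (g (rho T t) - g s - dg * (rho T t - s)))); [intros; ring|].
  apply littleo_within_plus; [exact Hf|].
  exact (littleo_within_mul_l D t _ _ _ (-1) (limit_free (fun _ => -1) D 0 t) Hg).
Qed.

Lemma is_nabla_deriv_mul (f g : R -> R) (df dg : R) :
  D t -> is_nabla_deriv T D f t df -> is_nabla_deriv T D g t dg ->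
  is_nabla_deriv T D (fun x => f x * g x) t (df * g (rho T t) + f t * dg).
Proof.
  intros Dt Hf Hg. apply is_nabla_deriv_littleo.
  pose proof (is_nabla_deriv_continuous f df Dt Hf) as Hfc.
  apply (littleo_within_ext D t _ (fun s =>
           g (rho T t) * (f (rho T t) - f s - df * (rho T t - s))
           + (f s * (g (rho T t) - g s - dg * (rho T t - s))
              + dg * ((f s - f t) * (rho T t - s))))); [intros; ring|].
  apply littleo_within_plus; [|apply littleo_within_plus].
  - exact (littleo_within_mul_l D t _ _ _ _ (limit_free (fun _ => g (rho T t)) D 0 t) Hf).
  - exact (littleo_within_mul_l D t _ _ _ _ Hfc Hg).
  - exact (littleo_within_mul_l D t _ _ _ _ (limit_free (fun _ => dg) D 0 t)
             (littleo_within_vanishing D t _ f (f t) Hfc)).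
Qed.

End NablaDerivative.

Lemma nabla_deriv_ge0_le (T : R -> Prop) (s t : R) (F F' : R -> R) :
  closed_set T -> T s -> T t -> s <= t ->
  (forall x, Icc_T T s t x -> is_nabla_deriv T (Icc_T T s t) F x (F' x)) ->
  (forall x, Ioc_T T s t x -> 0 <= F' x) ->
  F s <= F t.
Proof.
  intros HT Ts Tt Hst HF HF'.
  assert (F s - F t <= 0); [|lra].
  apply (le_0_of_le_eps_mul _ (t - s)); [lra|]. intros eps Heps.
  cut (F s <= F t + eps * (t - s)); [lra|].
  (* the slack eps (t - r) absorbs the derivative error at left-dense points *)
  apply (time_scale_backward_ind T s t (fun r => F r <= F t + eps * (t - r)));
    [exact HT | exact Tt | lra | | | | split; [exact Ts | lra]].
  - intros c v Tc Tv Hsc Hcv Hgap Pv.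
    assert (Dv : Icc_T T s t v) by (split; [exact Tv | lra]).
    pose proof (nabla_deriv_jump T _ v F (F' v) Dv (HF v Dv)) as Hjump.
    rewrite (rho_gap T c v Tc (proj1 Hcv) Hgap) in Hjump.
    pose proof (HF' v (conj Tv (conj (Rle_lt_trans _ _ _ Hsc (proj1 Hcv)) (proj2 Hcv)))).
    nra.
  - intros v Tv Hv Hld Pv.
    assert (Dv : Icc_T T s t v) by (split; [exact Tv | lra]).
    destruct (HF v Dv eps Heps) as [delta [Hdelta Hnear]].
    rewrite (left_dense_rho T v Hld) in Hnear.
    exists (Rmin delta (v - s)). split; [apply Rmin_pos; lra|].
    intros r Tr Hr.
    pose proof (Rmin_l delta (v - s)). pose proof (Rmin_r delta (v - s)).
    assert (Hvr : Rabs (v - r) = v - r) by (apply Rabs_right; lra).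
    specialize (Hnear r (conj Tr (conj (ltac:(lra) : s <= r) (ltac:(lra) : r <= t)))).
    rewrite Hvr in Hnear. specialize (Hnear ltac:(lra)).
    apply Rabs_le_between' in Hnear.
    pose proof (HF' v (conj Tv Hv)). nra.
  - intros v Tv Hv Hrd Pabove. apply Rle_plus_epsilon. intros eta Heta.
    assert (Dv : Icc_T T s t v) by (split; [exact Tv | lra]).
    destruct (is_nabla_deriv_continuous T _ v F (F' v) Dv (HF v Dv) eta Heta)
      as [delta [Hdelta Hnear]].
    destruct (Hrd (Rmin delta (t - v))) as [r [Tr Hr]]; [apply Rmin_pos; lra|].
    pose proof (Rmin_l delta (t - v)). pose proof (Rmin_r delta (t - v)).
    assert (Hdist : Rdist r v < delta) by (unfold Rdist; apply Rabs_def1; lra).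
    specialize (Hnear r (conj (conj Tr (conj (ltac:(lra) : s <= r) (ltac:(lra) : r <= t))) Hdist)).
    simpl in Hnear. unfold Rdist in Hnear. apply Rabs_def2 in Hnear.
    pose proof (Pabove r Tr (conj (proj1 Hr) (ltac:(lra) : r <= t))). nra.
Qed.

(* No sign is required at a point x with rho x = a: the value F a is not
   constrained, and such an x is the least point of (a, b]_T. *)
Lemma nabla_deriv_ge0_increasing_on (T : R -> Prop) (a b : R) (F F' : R -> R) :
  closed_set T ->
  (forall x, Ioc_T T a b x -> is_nabla_deriv T (Icc_T T a b) F x (F' x)) ->
  (forall x, Ioc_T T a b x -> a < rho T x -> 0 <= F' x) ->
  increasing_on (Ioc_T T a b) F.
Proof.
  intros HT HF HF' s t [Ts Hs] [Tt Ht] Hst.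
  apply (nabla_deriv_ge0_le T s t F F' HT Ts Tt Hst).
  - intros x [Tx Hx]. apply (is_nabla_deriv_subdomain T (Icc_T T a b)).
    + intros y [Ty Hy]. split; [exact Ty | lra].
    + apply HF. split; [exact Tx | lra].
  - intros x [Tx Hx]. pose proof (rho_ge T x s Ts (proj1 Hx)).
    apply HF'; [split; [exact Tx | lra] | lra].
Qed.

Lemma increasing_on_nabla_deriv_ge0 (T : R -> Prop) (a b : R) (f : R -> R) (x d : R) :
  closed_set T -> T a -> increasing_on (Ioc_T T a b) f ->
  Ioc_T T a b x -> a < rho T x -> is_nabla_deriv T (Icc_T T a b) f x d ->
  0 <= d.
Proof.
  intros HT Ta Hf [Tx Hx] Ha Hd.
  assert (Dx : Icc_T T a b x) by (split; [exact Tx | lra]).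
  destruct (Rle_lt_or_eq_dec _ _ (rho_le T x a Ta (proj1 Hx))) as [Hscat | Hdense].
  - pose proof (nabla_deriv_jump T _ x f d Dx Hd) as Hjump.
    assert (Irho : Ioc_T T a b (rho T x)) by (split; [exact (rho_mem T x a HT Ta (proj1 Hx)) | lra]).
    pose proof (Hf _ x Irho (conj Tx Hx) (Rlt_le _ _ Hscat)). nra.
  - assert (Hld := rho_eq_left_dense T x a Ta (proj1 Hx) Hdense).
    cut (- d <= 0); [lra|].
    apply (le_0_of_le_eps_mul _ 1); [lra|]. intros eps Heps.
    destruct (Hd eps Heps) as [delta [Hdelta Hnear]]. rewrite Hdense in Hnear.
    destruct (Hld (Rmin delta (x - a))) as [u [Tu Hu]]; [apply Rmin_pos; lra|].
    pose proof (Rmin_l delta (x - a)). pose proof (Rmin_r delta (x - a)).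
    assert (Hxu : Rabs (x - u) = x - u) by (apply Rabs_right; lra).
    specialize (Hnear u (conj Tu (conj (ltac:(lra) : a <= u) (ltac:(lra) : u <= b)))).
    rewrite Hxu in Hnear. specialize (Hnear ltac:(lra)).
    apply Rabs_le_between' in Hnear.
    pose proof (Hf u x (conj Tu (conj (ltac:(lra) : a < u) (ltac:(lra) : u <= b))) (conj Tx Hx) (ltac:(lra))).
    nra.
Qed.

Lemma decreasing_on_opp (D : R -> Prop) (f : R -> R) :
  decreasing_on D f <-> increasing_on D (fun x => - f x).
Proof.
  split; intros Hf s t Ds Dt Hst; pose proof (Hf s t Ds Dt Hst); lra.
Qed.

Lemma nabla_deriv_le0_decreasing_on (T : R -> Prop) (a b : R) (F F' : R -> R) :
  closed_set T ->
  (forall x, Ioc_T T a b x -> is_nabla_deriv T (Icc_T T a b) F x (F' x)) ->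
  (forall x, Ioc_T T a b x -> a < rho T x -> F' x <= 0) ->
  decreasing_on (Ioc_T T a b) F.
Proof.
  intros HT HF HF'. apply decreasing_on_opp.
  apply (nabla_deriv_ge0_increasing_on T a b _ (fun x => - F' x) HT).
  - intros x Ix. exact (is_nabla_deriv_opp T _ x F (F' x) (HF x Ix)).
  - intros x Ix Hx. pose proof (HF' x Ix Hx). lra.
Qed.

Lemma decreasing_on_nabla_deriv_le0 (T : R -> Prop) (a b : R) (f : R -> R) (x d : R) :
  closed_set T -> T a -> decreasing_on (Ioc_T T a b) f ->
  Ioc_T T a b x -> a < rho T x -> is_nabla_deriv T (Icc_T T a b) f x d ->
  d <= 0.
Proof.
  intros HT Ta Hf Ix Hx Hd.
  cut (0 <= - d); [lra|].
  apply (increasing_on_nabla_deriv_ge0 T a b (fun y => - f y) x (- d) HT Ta); auto.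
  - exact (proj1 (decreasing_on_opp _ f) Hf).
  - exact (is_nabla_deriv_opp T _ x f d Hd).
Qed.

Theorem proposition2p2 (T : R -> Prop) (alpha beta : R)
  (phi psi phi' psi' : R -> R) :
  time_scale T -> T alpha -> T beta -> alpha < beta ->
  (* phi, psi nabla differentiable on [alpha,beta]_T with nabla derivatives phi', psi' *)
  (forall x, Ioc_T T alpha beta x -> is_nabla_deriv T (Icc_T T alpha beta) phi x (phi' x)) ->
  (forall x, Ioc_T T alpha beta x -> is_nabla_deriv T (Icc_T T alpha beta) psi x (psi' x)) ->
  (forall x, Ioc_T T alpha beta x -> psi' x <> 0) ->
  (* phi^nabla / psi^nabla is nabla differentiable *)
  (exists g', forall x, Ioc_T T alpha beta x ->
      is_nabla_deriv T (Icc_T T alpha beta) (fun y => phi' y / psi' y) x (g' x)) ->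
  let Y := fun x => phi' x / psi' x * psi x - phi x in
  let I := Ioc_T T alpha beta in
  ((forall x, I x -> 0 <= psi (rho T x)) ->
     (increasing_on I (fun y => phi' y / psi' y) -> increasing_on I Y) /\
     (decreasing_on I (fun y => phi' y / psi' y) -> decreasing_on I Y)) /\
  ((forall x, I x -> psi (rho T x) <= 0) ->
     (increasing_on I (fun y => phi' y / psi' y) -> decreasing_on I Y) /\
     (decreasing_on I (fun y => phi' y / psi' y) -> increasing_on I Y)).
Proof.
  intros [_ HT] Ta _ _ Hphi Hpsi Hnz [g' Hg] Y I.
  assert (HY : forall x, I x ->
            is_nabla_deriv T (Icc_T T alpha beta) Y x (g' x * psi (rho T x))).
  { intros x Ix.
    assert (Dx : Icc_T T alpha beta x) by (destruct Ix as [Tx Hx]; split; [exact Tx | lra]).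
    replace (g' x * psi (rho T x)) with
      (g' x * psi (rho T x) + phi' x / psi' x * psi' x - phi' x) by (field; exact (Hnz x Ix)).
    apply (is_nabla_deriv_minus T _ x (fun y => phi' y / psi' y * psi y));
      [apply (is_nabla_deriv_mul T _ x (fun y => phi' y / psi' y)) |]; auto. }
  split; intros Hpsi_rho; split; intros Hmono.
  - apply (nabla_deriv_ge0_increasing_on T _ _ _ _ HT HY). intros x Ix Hx.
    pose proof (increasing_on_nabla_deriv_ge0 T _ _ _ _ _ HT Ta Hmono Ix Hx (Hg x Ix)).
    pose proof (Hpsi_rho x Ix). nra.
  - apply (nabla_deriv_le0_decreasing_on T _ _ _ _ HT HY). intros x Ix Hx.
    pose proof (decreasing_on_nabla_deriv_le0 T _ _ _ _ _ HT Ta Hmono Ix Hx (Hg x Ix)).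
    pose proof (Hpsi_rho x Ix). nra.
  - apply (nabla_deriv_le0_decreasing_on T _ _ _ _ HT HY). intros x Ix Hx.
    pose proof (increasing_on_nabla_deriv_ge0 T _ _ _ _ _ HT Ta Hmono Ix Hx (Hg x Ix)).
    pose proof (Hpsi_rho x Ix). nra.
  - apply (nabla_deriv_ge0_increasing_on T _ _ _ _ HT HY). intros x Ix Hx.
    pose proof (decreasing_on_nabla_deriv_le0 T _ _ _ _ _ HT Ta Hmono Ix Hx (Hg x Ix)).
    pose proof (Hpsi_rho x Ix). nra.
Qed.
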